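(* Let $\mathcal{D}$ be a vector lattice of bounded real functions on a nonempty set $X$ with the Stone property, and let $(\mathcal{E},\mathcal{D})$ be a bilinear form on which the unit contraction operates. Then $K(f):=\inf\{\mathcal{E}(f,\varphi):\varphi\in E_f\}$, $f\in\mathcal{D}_0^+$, defines a functional on the cone $\mathcal{D}_0^+$ which is additive, positively homogeneous and takes values in $[0,\infty)$.
   Context: Stone property: $f\in\mathcal{D}\Rightarrow f\wedge1\in\mathcal{D}$. Unit contraction $T_1(x)=\max(x,0)\wedge1$; it operates on $(\mathcal{E},\mathcal{D})$ if $\mathcal{E}(T_1(f))\le\mathcal{E}(f)$ for all $f\in\mathcal{D}$. A bilinear form is a symmetric nonnegative definite bilinear map, $\mathcal{E}(f)=\mathcal{E}(f,f)$. For $f\in\mathcal{D}^+$ (nonnegative elements), $E_f:=\{\varphi\in\mathcal{D}:\mathbf 1_{\{f>0\}}\le\varphi\le\mathbf 1\}$; $\mathcal{D}_0^+:=\{f\in\mathcal{D}^+:E_f\ne\emptyset\}$ and $\mathcal{D}_0$ the linear span of $\mathcal{D}_0^+$. *)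

From Stdlib Require Import Reals Lra.
Open Scope R_scope.

Section Defs.
Variable X : Type.

Definition fadd (f g : X -> R) : X -> R := fun x => f x + g x.
Definition fscal (a : R) (f : X -> R) : X -> R := fun x => a * f x.
Definition fzero : X -> R := fun _ => 0.
Definition fmax (f g : X -> R) : X -> R := fun x => Rmax (f x) (g x).
Definition fmin (f g : X -> R) : X -> R := fun x => Rmin (f x) (g x).
Definition fmin1 (f : X -> R) : X -> R := fun x => Rmin (f x) 1.

Definition bounded (f : X -> R) : Prop := exists M, forall x, Rabs (f x) <= M.

Definition vector_lattice_of_bounded (D : (X -> R) -> Prop) : Prop :=
  D fzero /\
  (forall f g, D f -> D g -> D (fadd f g)) /\
  (forall a f, D f -> D (fscal a f)) /\
  (forall f g, D f -> D g -> D (fmax f g)) /\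
  (forall f g, D f -> D g -> D (fmin f g)) /\
  (forall f, D f -> bounded f).

Definition stone (D : (X -> R) -> Prop) : Prop :=
  forall f, D f -> D (fmin1 f).

Definition bilinear_form (D : (X -> R) -> Prop) (E : (X -> R) -> (X -> R) -> R) : Prop :=
  (forall f g, D f -> D g -> E f g = E g f) /\
  (forall f g h, D f -> D g -> D h -> E (fadd f g) h = E f h + E g h) /\
  (forall a f g, D f -> D g -> E (fscal a f) g = a * E f g) /\
  (forall f, D f -> 0 <= E f f).

Definition T1 (f : X -> R) : X -> R := fun x => Rmin (Rmax (f x) 0) 1.

Definition unit_contraction_operates (D : (X -> R) -> Prop)
  (E : (X -> R) -> (X -> R) -> R) : Prop :=
  forall f, D f -> E (T1 f) (T1 f) <= E f f.

Definition Dplus (D : (X -> R) -> Prop) (f : X -> R) : Prop :=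
  D f /\ forall x, 0 <= f x.

Definition Ef (D : (X -> R) -> Prop) (f phi : X -> R) : Prop :=
  D phi /\ forall x, (if Rlt_dec 0 (f x) then 1 else 0) <= phi x /\ phi x <= 1.

Definition D0plus (D : (X -> R) -> Prop) (f : X -> R) : Prop :=
  Dplus D f /\ exists phi, Ef D f phi.

Definition is_inf (S : R -> Prop) (m : R) : Prop :=
  (forall y, S y -> m <= y) /\ (forall m', (forall y, S y -> m' <= y) -> m' <= m).

Definition Kset (D : (X -> R) -> Prop) (E : (X -> R) -> (X -> R) -> R) (f : X -> R) : R -> Prop :=
  fun y => exists phi, Ef D f phi /\ y = E f phi.

End Defs.
Arguments fadd {X}. Arguments fscal {X}. Arguments fzero {X}. Arguments fmax {X}. Arguments fmin {X}. Arguments fmin1 {X}. Arguments bounded {X}. Arguments vector_lattice_of_bounded {X}. Arguments stone {X}. Arguments bilinear_form {X}. Arguments T1 {X}. Arguments unit_contraction_operates {X}. Arguments Dplus {X}. Arguments Ef {X}. Arguments D0plus {X}. Arguments Kset {X}.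

(* For [f >= 0] in [D] and [phi] in [E_f], the contraction [T1] fixes [phi + t f] for
   every [t > 0], so [phi] minimises [t |-> E(phi + t f)] on [t >= 0]; letting [t -> 0]
   gives [E(f, phi) >= 0].  The same argument applied to [chi - phi - t f] shows that
   [phi |-> E(f, phi)] is antitone on [{phi : E_f | phi <= 1}].  Hence replacing
   [phi, psi] by [max phi psi] can only lower [E(f, phi) + E(g, psi)], which makes [K]
   additive; homogeneity holds because [E_{cf} = E_f] for [c > 0]. *)
From Stdlib Require Import Reals Lra FunctionalExtensionality.
Open Scope R_scope.

Lemma nonneg_of_quadratic_bound (a b : R) :
  0 <= b -> (forall t, 0 < t -> 0 <= 2 * t * a + t * t * b) -> 0 <= a.
Proof.
  intros hb H. destruct (Rle_or_lt 0 a) as [h | h]; auto.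
  set (t := - a / (b + 1)).
  assert (ht : 0 < t) by (unfold t; apply Rdiv_lt_0_compat; lra).
  specialize (H t ht).
  assert (e : t * (b + 1) = - a) by (unfold t; field; lra).
  assert (t * t * b <= t * t * (b + 1)) by nra.
  nra.
Qed.

Lemma clamp01_fixed (a s : R) : 0 <= a <= 1 ->
  s = 0 \/ (a = 1 /\ 0 <= s) \/ (a = 0 /\ s <= 0) ->
  Rmin (Rmax (a + s) 0) 1 = a.
Proof.
  intros Ha [-> | [[-> Hs] | [-> Hs]]]; unfold Rmax, Rmin;
    repeat destruct Rle_dec; lra.
Qed.

Lemma is_inf_unique (S : R -> Prop) (m m' : R) : is_inf S m -> is_inf S m' -> m = m'.
Proof. intros [Hm Gm] [Hm' Gm']. apply Rle_antisym; auto. Qed.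

Lemma is_inf_ext (S T : R -> Prop) (m : R) :
  (forall y, S y <-> T y) -> is_inf T m -> is_inf S m.
Proof.
  intros HST [Hm Gm]. split.
  - intros y Hy. apply Hm, HST, Hy.
  - intros m' H. apply Gm. intros y Hy. apply H, HST, Hy.
Qed.

Lemma is_inf_exists (S : R -> Prop) (b : R) :
  (exists y, S y) -> (forall y, S y -> b <= y) -> exists m, is_inf S m.
Proof.
  intros [y0 Hy0] Hb.
  destruct (completeness (fun y => S (- y))) as [m [Hub Hlub]].
  - exists (- b). intros y Hy. specialize (Hb _ Hy). lra.
  - exists (- y0). rewrite Ropp_involutive. exact Hy0.
  - exists (- m). split.
    + intros y Hy. assert (- y <= m) by (apply Hub; rewrite Ropp_involutive; exact Hy).
      lra.
    + intros m' Hm'. assert (m <= - m').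
      { apply Hlub. intros y Hy. specialize (Hm' _ Hy). lra. }
      lra.
Qed.

Lemma is_inf_scale (S : R -> Prop) (c m : R) : 0 <= c -> (exists y, S y) ->
  is_inf S m -> is_inf (fun y => exists z, S z /\ y = c * z) (c * m).
Proof.
  intros hc [y0 Hy0] [Hm Gm]. split.
  - intros y [z [Hz ->]]. apply Rmult_le_compat_l; auto.
  - intros m' H. destruct (Rle_lt_or_eq_dec _ _ hc) as [hc' | <-].
    + assert (m' / c <= m).
      { apply Gm. intros z Hz. specialize (H (c * z) (ex_intro _ z (conj Hz eq_refl))).
        apply (Rmult_le_reg_l c); auto. unfold Rdiv. field_simplify; lra. }
      apply (Rmult_le_reg_r (/ c)); [now apply Rinv_0_lt_compat |].
      replace (c * m * / c) with m by (field; lra). exact H0.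
    + specialize (H (0 * y0) (ex_intro _ y0 (conj Hy0 eq_refl))). lra.
Qed.

Lemma is_inf_sum_le (S T U : R -> Prop) (a b m : R) :
  is_inf S a -> is_inf T b -> is_inf U m ->
  (forall y z, S y -> T z -> exists w, U w /\ w <= y + z) -> m <= a + b.
Proof.
  intros [_ Ga] [_ Gb] [Hm _] H.
  assert (m - a <= b).
  { apply Gb. intros z Hz. assert (m - z <= a).
    { apply Ga. intros y Hy. destruct (H y z Hy Hz) as [w [Hw Hle]].
      specialize (Hm _ Hw). lra. }
    lra. }
  lra.
Qed.

Lemma is_inf_sum_ge (S T U : R -> Prop) (a b m : R) :
  is_inf S a -> is_inf T b -> is_inf U m ->
  (forall w, U w -> exists y z, S y /\ T z /\ w = y + z) -> a + b <= m.
Proof.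
  intros [Ha _] [Hb _] [_ Gm] H. apply Gm. intros w Hw.
  destruct (H w Hw) as [y [z [Hy [Hz ->]]]].
  specialize (Ha _ Hy). specialize (Hb _ Hz). lra.
Qed.

Section Energy.
Context {X : Type} (D : (X -> R) -> Prop) (E : (X -> R) -> (X -> R) -> R).
Hypothesis hD : vector_lattice_of_bounded D.
Hypothesis hE : bilinear_form D E.
Hypothesis hT : unit_contraction_operates D E.

Lemma D_add f g : D f -> D g -> D (fadd f g).
Proof. destruct hD as (_ & h & _); auto. Qed.

Lemma D_scal a f : D f -> D (fscal a f).
Proof. destruct hD as (_ & _ & h & _); auto. Qed.

Lemma D_max f g : D f -> D g -> D (fmax f g).
Proof. destruct hD as (_ & _ & _ & h & _); auto. Qed.

Lemma E_sym f g : D f -> D g -> E f g = E g f.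
Proof. destruct hE as (h & _); auto. Qed.

Lemma E_add_l f g h : D f -> D g -> D h -> E (fadd f g) h = E f h + E g h.
Proof. destruct hE as (_ & h' & _); auto. Qed.

Lemma E_scal_l a f g : D f -> D g -> E (fscal a f) g = a * E f g.
Proof. destruct hE as (_ & _ & h & _); auto. Qed.

Lemma E_diag_nonneg f : D f -> 0 <= E f f.
Proof. destruct hE as (_ & _ & _ & h); auto. Qed.

Lemma E_diag_expand u v t : D u -> D v ->
  E (fadd u (fscal t v)) (fadd u (fscal t v)) = E u u + 2 * t * E u v + t * t * E v v.
Proof.
  intros Hu Hv. assert (Htv : D (fscal t v)) by now apply D_scal.
  rewrite E_add_l, E_scal_l by auto using D_add.
  rewrite (E_sym u), (E_sym v) by auto using D_add.
  rewrite !E_add_l, !E_scal_l by auto.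
  rewrite (E_sym v u) by auto. ring.
Qed.

Lemma E_nonneg_of_T1_fixed u v : D u -> D v ->
  (forall t, 0 < t -> T1 (fadd u (fscal t v)) = u) -> 0 <= E u v.
Proof.
  intros Hu Hv Hfix. apply (nonneg_of_quadratic_bound _ (E v v)).
  { now apply E_diag_nonneg. }
  intros t ht. pose proof (hT _ (D_add _ _ Hu (D_scal t _ Hv))) as H.
  rewrite Hfix, E_diag_expand in H by auto. lra.
Qed.

Lemma Ef_bounds f phi : Ef D f phi -> forall x, 0 <= phi x <= 1.
Proof.
  intros [_ H] x. destruct (H x) as [h1 h2]. destruct (Rlt_dec 0 (f x)); lra.
Qed.

Lemma Ef_one f phi x : Ef D f phi -> 0 < f x -> phi x = 1.
Proof.
  intros [_ H] Hfx. destruct (H x) as [h1 h2]. destruct (Rlt_dec 0 (f x)); lra.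
Qed.

Lemma Ef_antitone f g phi : (forall x, 0 < f x -> 0 < g x) -> Ef D g phi -> Ef D f phi.
Proof.
  intros Hfg [Hp Hpx]. split; auto. intro x. destruct (Hpx x) as [h1 h2]. split; auto.
  destruct (Rlt_dec 0 (f x)) as [r | r]; destruct (Rlt_dec 0 (g x)) as [r' | r']; try lra.
  exfalso; auto.
Qed.

Lemma Ef_fadd_fmax f g p q : Dplus D f -> Dplus D g -> Ef D f p -> Ef D g q ->
  Ef D (fadd f g) (fmax p q).
Proof.
  intros [_ Hf0] [_ Hg0] Hp Hq. split; [apply D_max; [apply Hp | apply Hq] |].
  intro x. unfold fmax, fadd.
  pose proof (Ef_bounds _ _ Hp x). pose proof (Ef_bounds _ _ Hq x).
  destruct (Rlt_dec 0 (f x + g x)) as [r | r].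
  - assert (0 < f x \/ 0 < g x) as [Hfx | Hgx] by (specialize (Hf0 x); lra).
    + rewrite (Ef_one _ _ _ Hp Hfx). unfold Rmax; destruct Rle_dec; lra.
    + rewrite (Ef_one _ _ _ Hq Hgx). unfold Rmax; destruct Rle_dec; lra.
  - unfold Rmax; destruct Rle_dec; lra.
Qed.

Lemma E_Ef_nonneg f phi : Dplus D f -> Ef D f phi -> 0 <= E f phi.
Proof.
  intros [Hf Hf0] Hp. assert (Dp : D phi) by apply Hp.
  rewrite E_sym by auto. apply E_nonneg_of_T1_fixed; auto.
  intros t ht. apply functional_extensionality; intro x. unfold T1, fadd, fscal.
  apply clamp01_fixed; [exact (Ef_bounds _ _ Hp x) |].
  specialize (Hf0 x). destruct (Rlt_dec 0 (f x)) as [r | r].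
  - right; left. split; [exact (Ef_one _ _ _ Hp r) | nra].
  - left. replace (f x) with 0 by lra. ring.
Qed.

Lemma E_Ef_antitone f phi chi : Dplus D f -> Ef D f phi -> D chi ->
  (forall x, phi x <= chi x <= 1) -> E f chi <= E f phi.
Proof.
  intros [Hf Hf0] Hp Hc Hpc. assert (Dp : D phi) by apply Hp.
  set (d := fadd chi (fscal (-1) phi)).
  set (v := fscal (-1) f).
  assert (Dd : D d) by (apply D_add; auto; apply D_scal; auto).
  assert (Dv : D v) by (apply D_scal; auto).
  assert (H : 0 <= E d v).
  { apply E_nonneg_of_T1_fixed; auto.
    intros t ht. apply functional_extensionality; intro x.
    unfold T1, d, v, fadd, fscal.
    pose proof (Ef_bounds _ _ Hp x). specialize (Hpc x). specialize (Hf0 x).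
    apply clamp01_fixed; [lra |].
    destruct (Rlt_dec 0 (f x)) as [r | r].
    - right; right. rewrite (Ef_one _ _ _ Hp r) in *. split; [lra | nra].
    - left. replace (f x) with 0 by lra. ring. }
  unfold d, v in H.
  rewrite E_add_l, E_scal_l, (E_sym chi), (E_sym phi), !E_scal_l in H by auto using D_scal.
  lra.
Qed.

Lemma E_fadd_fmax_le f g p q : Dplus D f -> Dplus D g -> Ef D f p -> Ef D g q ->
  E (fadd f g) (fmax p q) <= E f p + E g q.
Proof.
  intros Hf Hg Hp Hq. assert (Dm : D (fmax p q)) by (apply D_max; [apply Hp | apply Hq]).
  rewrite E_add_l by (apply Hf || apply Hg || exact Dm).
  assert (E f (fmax p q) <= E f p).
  { apply E_Ef_antitone; auto. intro x. pose proof (Ef_bounds _ _ Hp x).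
    pose proof (Ef_bounds _ _ Hq x). unfold fmax, Rmax; destruct Rle_dec; lra. }
  assert (E g (fmax p q) <= E g q).
  { apply E_Ef_antitone; auto. intro x. pose proof (Ef_bounds _ _ Hp x).
    pose proof (Ef_bounds _ _ Hq x). unfold fmax, Rmax; destruct Rle_dec; lra. }
  lra.
Qed.

Lemma D0plus_fadd f g : D0plus D f -> D0plus D g -> D0plus D (fadd f g).
Proof.
  intros [Hf [p Hp]] [Hg [q Hq]]. split; [split |].
  - apply D_add; [apply Hf | apply Hg].
  - intro x. unfold fadd. pose proof (proj2 Hf x). pose proof (proj2 Hg x). lra.
  - exists (fmax p q). now apply Ef_fadd_fmax.
Qed.

Lemma D0plus_fscal c f : 0 <= c -> D0plus D f -> D0plus D (fscal c f).
Proof.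
  intros hc [[Hf Hf0] [p Hp]]. split; [split |].
  - now apply D_scal.
  - intro x. unfold fscal. specialize (Hf0 x). nra.
  - exists p. apply (Ef_antitone _ f); auto. intros x h. unfold fscal in h.
    specialize (Hf0 x). nra.
Qed.

Lemma Kset_nonneg f y : Dplus D f -> Kset D E f y -> 0 <= y.
Proof. intros Hf [p [Hp ->]]. now apply E_Ef_nonneg. Qed.

Lemma Kset_nonempty f : D0plus D f -> exists y, Kset D E f y.
Proof. intros [_ [p Hp]]. exists (E f p), p. auto. Qed.

Lemma Kset_fadd_dominated f g a b : Dplus D f -> Dplus D g ->
  Kset D E f a -> Kset D E g b -> exists w, Kset D E (fadd f g) w /\ w <= a + b.
Proof.
  intros Hf Hg [p [Hp ->]] [q [Hq ->]]. exists (E (fadd f g) (fmax p q)). split.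
  - exists (fmax p q). split; auto. now apply Ef_fadd_fmax.
  - now apply E_fadd_fmax_le.
Qed.

Lemma Kset_fadd_split f g w : Dplus D f -> Dplus D g -> Kset D E (fadd f g) w ->
  exists a b, Kset D E f a /\ Kset D E g b /\ w = a + b.
Proof.
  intros [Hf Hf0] [Hg Hg0] [p [Hp ->]].
  assert (Hpf : Ef D f p).
  { apply (Ef_antitone _ (fadd f g)); auto. intros x h. unfold fadd. specialize (Hg0 x); lra. }
  assert (Hpg : Ef D g p).
  { apply (Ef_antitone _ (fadd f g)); auto. intros x h. unfold fadd. specialize (Hf0 x); lra. }
  exists (E f p), (E g p). split; [exists p; auto | split; [exists p; auto |]].
  apply E_add_l; auto. apply Hp.
Qed.

Lemma Kset_fscal c f y : 0 <= c -> D0plus D f ->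
  Kset D E (fscal c f) y <-> exists z, Kset D E f z /\ y = c * z.
Proof.
  intros hc [[Hf Hf0] [p0 Hp0]]. split.
  - intros [p [Hp ->]]. rewrite E_scal_l by (auto; apply Hp).
    destruct (Rle_lt_or_eq_dec _ _ hc) as [hc' | <-].
    + exists (E f p). split; auto. exists p. split; auto.
      apply (Ef_antitone _ (fscal c f)); auto. intros x h. unfold fscal. nra.
    + exists (E f p0). split; [exists p0; auto | ring].
  - intros [z [[p [Hp ->]] ->]]. exists p. split.
    + apply (Ef_antitone _ f); auto. intros x h. unfold fscal in h.
      specialize (Hf0 x). nra.
    + symmetry. apply E_scal_l; auto. apply Hp.
Qed.

End Energy.

Theorem lemmaL (X : Type) (x0 : X) (D : (X -> R) -> Prop)
  (E : (X -> R) -> (X -> R) -> R)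
  (hD : vector_lattice_of_bounded D) (hS : stone D)
  (hE : bilinear_form D E) (hT : unit_contraction_operates D E) :
  (* D_0^+ is a cone *)
  (forall f g, D0plus D f -> D0plus D g -> D0plus D (fadd f g)) /\
  (forall c f, 0 <= c -> D0plus D f -> D0plus D (fscal c f)) /\
  (* K(f) = inf { E(f,phi) : phi in E_f } exists as a real number for f in D_0^+ *)
  (forall f, D0plus D f -> exists m, is_inf (Kset D E f) m) /\
  (* any K given by this infimum is [0,oo)-valued, additive, positively homogeneous *)
  (forall K : (X -> R) -> R,
     (forall f, D0plus D f -> is_inf (Kset D E f) (K f)) ->
     (forall f, D0plus D f -> 0 <= K f) /\
     (forall f g, D0plus D f -> D0plus D g -> K (fadd f g) = K f + K g) /\
     (forall c f, 0 <= c -> D0plus D f -> K (fscal c f) = c * K f)).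
Proof.
  split; [exact (D0plus_fadd D hD) |].
  split; [exact (D0plus_fscal D hD) |].
  split.
  { intros f Hf. apply (is_inf_exists _ 0); [now apply Kset_nonempty |].
    intros y. apply (Kset_nonneg D E hD hE hT), Hf. }
  intros K HK. split; [| split].
  - intros f Hf. apply (proj2 (HK f Hf)). intros y.
    apply (Kset_nonneg D E hD hE hT), Hf.
  - intros f g Hf Hg. pose proof (D0plus_fadd D hD f g Hf Hg) as Hfg.
    apply Rle_antisym.
    + apply (is_inf_sum_le _ _ _ _ _ _ (HK f Hf) (HK g Hg) (HK _ Hfg)).
      intros y z. exact (Kset_fadd_dominated D E hD hE hT f g y z (proj1 Hf) (proj1 Hg)).
    + apply (is_inf_sum_ge _ _ _ _ _ _ (HK f Hf) (HK g Hg) (HK _ Hfg)).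
      intros w. exact (Kset_fadd_split D E hE f g w (proj1 Hf) (proj1 Hg)).
  - intros c f hc Hf.
    apply (is_inf_unique (Kset D E (fscal c f))); [apply HK, (D0plus_fscal D hD); auto |].
    apply (is_inf_ext _ _ _ (fun y => Kset_fscal D E hE c f y hc Hf)).
    apply is_inf_scale; auto. now apply Kset_nonempty.
Qed.
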